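(* Let $n\ge2$ and $\boldsymbol{\lambda}=(\lambda_1,\dots,\lambda_n)$ a vector of positive integers. For every minimal generator $(a_1,\dots,a_n,d)$ of $M(\boldsymbol{\lambda})$ we have $d<n$.
   Context: $M(\boldsymbol{\lambda})=\{(a_1,\dots,a_n,d)\in\mathbb{N}^{n+1}\mid a_1/\lambda_1+\cdots+a_n/\lambda_n\ge d\}$. A minimal generator of $M(\boldsymbol{\lambda})$ is a nonzero element that cannot be written as the sum of two nonzero elements of $M(\boldsymbol{\lambda})$. *)

From mathcomp Require Import all_boot all_order all_algebra.
Set Implicit Arguments. Unset Strict Implicit. Unset Printing Implicit Defensive.
Import Order.TTheory GRing.Theory Num.Theory.

(* An element of N^{n+1} is represented as a pair (a, d) with a : 'I_n -> nat
   (the coordinates a_1..a_n) and d : nat. *)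

Definition inM (n : nat) (lam : 'I_n -> nat) (a : 'I_n -> nat) (d : nat) : Prop :=
  ((d%:R : rat) <= \sum_(i < n) ((a i)%:R / (lam i)%:R))%R.

Definition is_zero_elt (n : nat) (a : 'I_n -> nat) (d : nat) : Prop :=
  (forall i, a i = 0%N) /\ d = 0%N.

Definition minimal_generator (n : nat) (lam : 'I_n -> nat) (a : 'I_n -> nat) (d : nat) : Prop :=
  inM lam a d /\ ~ is_zero_elt a d /\
  ~ (exists (b c : 'I_n -> nat) (e f : nat),
        inM lam b e /\ inM lam c f /\ ~ is_zero_elt b e /\ ~ is_zero_elt c f /\
        (forall i, a i = (b i + c i)%N) /\ d = (e + f)%N).

From mathcomp Require Import all_boot all_order all_algebra.
Import Order.TTheory GRing.Theory Num.Theory.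
Set Implicit Arguments. Unset Strict Implicit. Unset Printing Implicit Defensive.

(* If d >= n then sum_i a_i/lambda_i >= n, which forces a_j >= lambda_j for
   some j. Peeling off the element (lambda_j e_j, 1), whose weight is exactly 1,
   leaves (a - lambda_j e_j, d - 1) in M(lambda), and it is nonzero because
   d - 1 >= n - 1 >= 1. *)

Section Weight.

Variables (n : nat) (lam : 'I_n -> nat).
Hypothesis lam_gt0 : forall i, (0 < lam i)%N.

Local Open Scope ring_scope.

Definition weight (a : 'I_n -> nat) : rat := \sum_(i < n) (a i)%:R / (lam i)%:R.

Definition scaled_unit (j : 'I_n) (i : 'I_n) : nat := if i == j then lam j else 0%N.

Lemma scaled_unit_le a j : (lam j <= a j)%N -> forall i, (scaled_unit j i <= a i)%N.
Proof. by move=> le_lam_a i; rewrite /scaled_unit; case: eqP => [->|]. Qed.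

Lemma inME a d : inM lam a d <-> d%:R <= weight a.
Proof. by []. Qed.

Lemma weight_scaled_unit j : weight (scaled_unit j) = 1.
Proof.
rewrite /weight (bigD1 j) //= big1 => [|i /negbTE ij]; last by rewrite /scaled_unit ij mul0r.
by rewrite /scaled_unit eqxx addr0 mulfV // pnatr_eq0 -lt0n.
Qed.

Lemma weight_subn a b : (forall i, b i <= a i)%N ->
  weight (fun i => a i - b i)%N = weight a - weight b.
Proof.
by move=> le_ba; rewrite /weight -sumrB; apply: eq_bigr => i _; rewrite natrB // mulrBl.
Qed.

Lemma exists_lam_le_of_weight_ge a : (0 < n)%N -> n%:R <= weight a ->
  exists j, (lam j <= a j)%N.
Proof.
move=> n_gt0 le_n_wa; apply/existsP; apply: contraTT le_n_wa => /existsPn small.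
rewrite -ltNge -[n in n%:R]card_ord -sumr_const.
apply: ltr_sum => [|i _].
  by apply/hasP; exists (Ordinal n_gt0); rewrite ?mem_index_enum.
by rewrite ltr_pdivrMr ?ltr0n // mul1r ltr_nat ltnNge small.
Qed.

Lemma inM_peel a d j : inM lam a d -> (lam j <= a j)%N -> (0 < d)%N ->
  inM lam (fun i => a i - scaled_unit j i)%N d.-1.
Proof.
move=> /inME le_d_wa le_lam_a d_gt0; apply/inME.
rewrite weight_subn; last exact: scaled_unit_le.
by rewrite weight_scaled_unit lerBrDr natr1 prednK.
Qed.

End Weight.

Theorem corollary5p5 (n : nat) (lam : 'I_n -> nat) (a : 'I_n -> nat) (d : nat) :
  (2 <= n)%N -> (forall i, (0 < lam i)%N) ->
  minimal_generator lam a d -> (d < n)%N.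
Proof.
move=> n_ge2 lam_gt0 [inA [_ indecomposable]].
rewrite ltnNge; apply/negP => le_n_d.
have d_gt1 : (1 < d)%N by apply: leq_trans le_n_d.
have [j le_lam_a] : exists j, (lam j <= a j)%N.
  apply: exists_lam_le_of_weight_ge => //; first exact: ltnW.
  by apply: le_trans inA; rewrite ler_nat.
have d_gt0 : (0 < d)%N by apply: ltnW.
apply: indecomposable.
exists (scaled_unit lam j), (fun i => a i - scaled_unit lam j i)%N, 1%N, d.-1.
split; first by apply/inME; rewrite weight_scaled_unit.
split; first exact: inM_peel.
split; first by case.
split; first by case=> _ /eqP; rewrite -subn1 subn_eq0 leqNgt d_gt1.
split; last by rewrite add1n prednK.
by move=> i; rewrite subnKC //; apply: scaled_unit_le.
Qed.
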